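(* Suppose $\mathcal Y$ is finite-dimensional and $c_{00}(\mathcal Z)\subseteq\underline{\mathcal Z}$. Let $H:\underline{\mathcal Z}\to\mathcal Y$ be a linear functional. (i) $H$ has the product FMP if and only if it has finite memory. (ii) If $\underline{\mathcal Z}=\mathcal Z^{\mathbb Z_-}$, then the following are equivalent: $H$ has the product FMP; $H$ has finite memory; $H$ has the minimal FMP and is minimally continuous.
   Context: Let $(\mathcal Z,\|\cdot\|)$ and $(\mathcal Y,\|\cdot\|_{\mathcal Y})$ be normed vector spaces over $\mathbb R$ and $\mathcal B=\{z\in\mathcal Z:\|z\|\le1\}$. Let $\mathbb Z_-=\{0,-1,-2,\dots\}$; elements of $\mathcal Z^{\mathbb Z_-}$ are sequences $\underline z=(z_t)_{t\le0}$. For $t\in\mathbb Z_-$, $\delta^t:\mathcal Z\to\mathcal Z^{\mathbb Z_-}$ maps $z$ to the sequence whose entry at time $t$ is $z$ and all other entries are $0$. Standing assumption: $\underline{\mathcal Z}\subseteq\mathcal Z^{\mathbb Z_-}$ is a set such that (a) $\underline{\mathcal Z}$ is convex and $\underline{\mathcal Z}=\{-\underline z:\underline z\in\underline{\mathcal Z}\}$; (b) $\delta^t(\mathcal B)\subseteq\underline{\mathcal Z}$ for all $t\in\mathbb Z_-$; (c) for every $\underline z\in\underline{\mathcal Z}$ and every $J\subseteq\mathbb Z_-$, the sequence $\sum_{t\in J}\delta^t(z_t)$ (equal to $z_t$ at times $t\in J$ and $0$ elsewhere) belongs to $\underline{\mathcal Z}$. A functional $H:\underline{\mathcal Z}\to\mathcal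 Y$ is linear if it is the restriction of a linear map defined on the linear span of $\underline{\mathcal Z}$. $c_{00}(\mathcal Z)$ is the set of sequences in $\mathcal Z^{\mathbb Z_-}$ with at most finitely many non-zero entries. $L(\mathcal Z,\mathcal Y)$ is the space of continuous linear maps $\mathcal Z\to\mathcal Y$. $H$ has a formal convolution representation if there is $\underline\kappa\in L(\mathcal Z,\mathcal Y)^{\mathbb Z_-}$ with $H(\underline z)=\lim_{T\to-\infty}\sum_{t=T}^0\kappa_t(z_t)$ for all $\underline z\in\underline{\mathcal Z}$ (such $\underline\kappa$ is unique). $H$ has finite memory if it has a formal convolution representation $\underline\kappa$ with $\kappa_t=0$ for all but at most finitely many $t\in\mathbb Z_-$. $H$ has the product fading memory property (product FMP) if it is continuous with respect to the subspace topology on $\underline{\mathcal Z}$ induced by the product topology on $\mathcal Z^{\mathbb Z_-}$ (each factor carrying the norm topology). $H$ is minimally continuous if $H\circ\delta^t:\mathcal B\to\mathcal Y$ is continuous for every $t\in\mathbb Z_-$. $H$ has the minimal fading memory property (minimal FMP) if $H(\sum_{t=T}^0\delta^t(z_t))\to H(\underline z)$ as $T\to-\infty$ for every $\underline z\in\underline{\mathcal Z}$. *)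

From HB Require Import structures.
From mathcomp Require Import all_boot all_order all_algebra.
From mathcomp Require Import all_classical all_reals all_analysis.
Set Implicit Arguments. Unset Strict Implicit. Unset Printing Implicit Defensive.
Import Order.TTheory GRing.Theory Num.Theory.
Import numFieldNormedType.Exports.
Local Open Scope classical_set_scope.
Local Open Scope ring_scope.

(* Convention: a left-infinite sequence (z_t)_{t <= 0} in Z^{Z_-} is
   represented as  z : nat -> Z  with  z n = z_{-n}. *)

Section Defs.
Context {R : realType} {Z Y : normedModType R}.

Definition delta (t : nat) (z : Z) : nat -> Z :=
  fun s => if s == t then z else 0.

Definition restrict_seq (J : pred nat) (z : nat -> Z) : nat -> Z :=
  fun s => if J s then z s else 0.

Definition trunc (T : nat) (z : nat -> Z) : nat -> Z :=
  restrict_seq (fun s => (s <= T)%N) z.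

Definition unit_ball : set Z := [set z | `|z| <= 1].

Definition standing_assumption (Zset : set (nat -> Z)) : Prop :=
  [/\ (forall u v (l : R), Zset u -> Zset v -> 0 <= l -> l <= 1 ->
          Zset (fun s => l *: u s + (1 - l) *: v s)),
      Zset = [set u | Zset (fun s => - u s)],
      (forall t z, unit_ball z -> Zset (delta t z)) &
      (forall z (J : pred nat), Zset z -> Zset (restrict_seq J z))].

Definition c00 : set (nat -> Z) :=
  [set z | exists N : nat, forall t, (N <= t)%N -> z t = 0].

Definition lin_span (Zset : set (nat -> Z)) : set (nat -> Z) :=
  [set u | exists (n : nat) (a : 'I_n -> R) (w : 'I_n -> nat -> Z),
      (forall i, Zset (w i)) /\ u = (fun s => \sum_(i < n) a i *: w i s)].

Definition linear_on (Zset : set (nat -> Z)) (H : (nat -> Z) -> Y) : Prop :=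
  exists L : (nat -> Z) -> Y,
    (forall u v (a b : R), lin_span Zset u -> lin_span Zset v ->
        L (fun s => a *: u s + b *: v s) = a *: L u + b *: L v) /\
    (forall z, Zset z -> L z = H z).

Definition cont_linear (k : Z -> Y) : Prop :=
  (forall (a b : R) (x y : Z), k (a *: x + b *: y) = a *: k x + b *: k y) /\
  continuous k.

Definition conv_rep (Zset : set (nat -> Z)) (H : (nat -> Z) -> Y)
    (kappa : nat -> Z -> Y) : Prop :=
  (forall t, cont_linear (kappa t)) /\
  (forall z, Zset z ->
     (fun T : nat => \sum_(t < T.+1) kappa t (z t)) @ \oo --> H z).

Definition finite_memory (Zset : set (nat -> Z)) (H : (nat -> Z) -> Y) : Prop :=
  exists kappa : nat -> Z -> Y, conv_rep Zset H kappa /\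
    exists N : nat, forall t, (N <= t)%N -> kappa t = (fun _ => 0).

Definition product_FMP (Zset : set (nat -> Z)) (H : (nat -> Z) -> Y) : Prop :=
  {within (Zset : set {ptws nat -> Z}), continuous (H : {ptws nat -> Z} -> Y)}.

Definition minimally_continuous (H : (nat -> Z) -> Y) : Prop :=
  forall t : nat, {within unit_ball, continuous (fun z => H (delta t z))}.

Definition minimal_FMP (Zset : set (nat -> Z)) (H : (nat -> Z) -> Y) : Prop :=
  forall z, Zset z -> (fun T : nat => H (trunc T z)) @ \oo --> H z.

End Defs.

Definition finite_dimensional {R : realType} (Y : normedModType R) : Prop :=
  exists (n : nat) (e : 'I_n -> Y),
    forall y : Y, exists a : 'I_n -> R, y = \sum_(i < n) a i *: e i.

From mathcomp Require Import all_boot all_order all_algebra.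
From mathcomp Require Import all_classical all_reals all_analysis.
Import Order.TTheory GRing.Theory Num.Theory.
Import numFieldNormedType.Exports.
Local Open Scope classical_set_scope.
Local Open Scope ring_scope.

(* The candidate kernel is kappa_t := H o delta^t; by linearity, H applied to
   the truncation of z at time -T is the T-th partial convolution sum of z.
   Both the product FMP and (on the whole of Z^{Z_-}) the minimal FMP force
   kappa_t (z_t) -> 0 for suitable sequences z: in the first case because
   delta^t (z_t) -> 0 in the product topology, in the second because the terms
   of a convergent series tend to 0.  Choosing z_t with |kappa_t (z_t)| = 1
   whenever kappa_t <> 0 shows that kappa_t = 0 for all large t.  Conversely,
   a finite-memory functional is a finite sum of continuous functions of
   finitely many coordinates. *)

Section normed_maps.
Context {R : realType} {Z Y : normedModType R}.

Lemma additive_continuous (f : Z -> Y) :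
  {morph f : x y / x + y} -> {for 0, continuous f} -> continuous f.
Proof.
move=> fD f_cont0 x.
have f0 : f 0 = 0 by apply: (@addrI _ (f 0)); rewrite -fD !addr0.
have f_shift : (fun y => f (y - x)) @ nbhs x --> 0.
  rewrite -f0; apply: (@cvg_comp _ _ _ (fun y => y - x) f _ (nbhs 0)) => //.
  by rewrite -(subrr x); apply: cvgB; [exact: cvg_id | exact: cvg_cst].
have f_x : (fun y => f (y - x) + f x) @ nbhs x --> f x.
  by rewrite -[X in _ --> X]add0r; apply: cvgD => //; exact: cvg_cst.
apply: (cvg_trans _ f_x).
by apply: near_eq_cvg; apply: nearW => y; rewrite /= -fD subrK.
Qed.

Lemma unit_ball_continuous0 (f : Z -> Y) :
  {within unit_ball, continuous f} -> {for 0, continuous f}.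
Proof.
have ball0 : unit_ball (0 : Z) by rewrite /unit_ball /= normr0 ler01.
move=> /subspace_continuousP /(_ 0 ball0); rewrite within_interior //.
apply: filterS (nbhsx_ballx (0 : Z) 1 ltr01) => y.
by rewrite -ball_normE /ball_ /= sub0r normrN => /ltW.
Qed.

Lemma eventually_zero_of_cvg0 (k : nat -> Z -> Y) :
  (forall t c x, k t (c *: x) = c *: k t x) ->
  (forall z : nat -> Z, (fun t => k t (z t)) @ \oo --> 0) ->
  exists N, forall t, (N <= t)%N -> k t = (fun _ => 0).
Proof.
move=> kZ k_cvg0.
have /choice [z z_unit] : forall t, exists x : Z,
    forall y, k t y != 0 -> `|k t x| = 1.
  move=> t; have [[y ky]|k_eq0] := pselect (exists y, k t y != 0).
    by exists (`|k t y|^-1 *: y) => _ _; rewrite kZ normfZV.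
  by exists 0 => y ky; case: k_eq0; exists y.
have /cvgr0Pnorm_lt /(_ 1 ltr01) [N _ kz_small] := k_cvg0 z.
exists N => t /kz_small /= kz_lt1; apply/funext => x; apply/eqP.
by apply: contraTT kz_lt1 => /z_unit ->; rewrite ltxx.
Qed.

End normed_maps.

Section pointwise_sequences.
Context {R : realType} {Z : normedModType R}.
Implicit Types (z : nat -> Z) (x : Z).

Lemma c00_delta t x : c00 (delta t x).
Proof.
by exists t.+1 => s; rewrite /delta; case: eqP => // ->; rewrite ltnn.
Qed.

Lemma c00_trunc T z : c00 (trunc T z).
Proof.
by exists T.+1 => s; rewrite /trunc /restrict_seq ltnNge => /negbTE ->.
Qed.

Lemma c00_cst0 : c00 (fun=> 0 : Z).
Proof. by exists 0%N. Qed.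

Lemma delta_continuous t : continuous (delta t : Z -> {ptws nat -> Z}).
Proof.
move=> x; apply/pointwise_cvgP => s.
change ((fun y => delta t y s) @ x --> delta t x s).
by rewrite /delta; case: eqP => _; [exact: cvg_id | exact: cvg_cst].
Qed.

Lemma delta_cvg0 z : (fun t => delta t (z t) : {ptws nat -> Z}) @ \oo -->
  ((fun=> 0) : {ptws nat -> Z}).
Proof.
apply/pointwise_cvgP => s.
change ((fun t => delta t (z t) s) @ \oo --> 0); apply: cvg_near_cst.
exists s.+1 => // t /= st.
by rewrite /delta ifN // ltn_eqF.
Qed.

Lemma trunc_cvg (z : {ptws nat -> Z}) : (fun T => trunc T z) @ \oo --> z.
Proof.
apply/pointwise_cvgP => s.
change ((fun T => trunc T z s) @ \oo --> z s); apply: cvg_near_cst.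
exists s => // T /= sT.
by rewrite /trunc /restrict_seq sT.
Qed.

Lemma eval_cvg (z : {ptws nat -> Z}) s :
  (fun u : {ptws nat -> Z} => u s) @ nbhs z --> z s.
Proof. by move: s; apply/pointwise_cvgP; exact: cvg_id. Qed.

Lemma finite_conv_continuous {Y : normedModType R} (k : nat -> Z -> Y) N :
  (forall t, continuous (k t)) ->
  continuous (fun z : {ptws nat -> Z} => \sum_(t < N) k t (z t)).
Proof.
move=> k_cont z.
apply: (@cvg_big Y 'I_N +%R 0 xpredT add_continuous _ (nbhs z) _
  (fun t u => k t (u t))) => // t _.
exact: (cvg_comp _ _ (eval_cvg z t) (k_cont t (z t))).
Qed.

End pointwise_sequences.

Lemma lin_span_self {R : realType} {Z : normedModType R}
    (Zset : set (nat -> Z)) z : Zset z -> lin_span Zset z.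
Proof.
move=> Zz; exists 1%N, (fun=> 1), (fun=> z); split => //.
by apply/funext => s; rewrite big_ord1 scale1r.
Qed.

Section linear_functional.
Context {R : realType} {Z Y : normedModType R}.
Variables (Zset : set (nat -> Z)) (H : (nat -> Z) -> Y).
Hypothesis c00_sub : c00 `<=` Zset.
Hypothesis H_linear : linear_on Zset H.

Definition kernel t (x : Z) : Y := H (delta t x).

Lemma Zset_delta t x : Zset (delta t x). Proof. exact/c00_sub/c00_delta. Qed.
Lemma Zset_trunc T z : Zset (trunc T z). Proof. exact/c00_sub/c00_trunc. Qed.
Lemma Zset_cst0 : Zset (fun=> 0). Proof. exact/c00_sub/c00_cst0. Qed.
#[local] Hint Resolve Zset_delta Zset_trunc Zset_cst0 : core.

Lemma H_lincomb u v w (a b : R) : Zset u -> Zset v -> Zset w ->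
  w = (fun s => a *: u s + b *: v s) -> H w = a *: H u + b *: H v.
Proof.
case: H_linear => L [L_lin L_H] Zu Zv Zw w_def; subst w.
by rewrite -L_H // (L_lin u v a b) ?L_H //; apply: lin_span_self.
Qed.

Lemma H_cst0 : H (fun=> 0) = 0.
Proof.
by rewrite (@H_lincomb _ _ _ 0 0 Zset_cst0 Zset_cst0) ?scale0r ?addr0.
Qed.

Lemma kernel_lincomb t a b x y :
  kernel t (a *: x + b *: y) = a *: kernel t x + b *: kernel t y.
Proof.
apply: H_lincomb => //.
by apply/funext => s; rewrite /delta; case: eqP; rewrite ?scaler0 ?addr0.
Qed.

Lemma kernelD t : {morph kernel t : x y / x + y}.
Proof. by move=> x y; have := kernel_lincomb t 1 1 x y; rewrite !scale1r. Qed.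

Lemma kernelZ t c x : kernel t (c *: x) = c *: kernel t x.
Proof. by have := kernel_lincomb t c 0 x x; rewrite !scale0r !addr0. Qed.

Lemma H_trunc T z : H (trunc T z) = \sum_(t < T.+1) kernel t (z t).
Proof.
elim: T => [|T IH].
  rewrite big_ord1 /kernel; congr H; apply/funext => s.
  by rewrite /trunc /restrict_seq /delta leqn0; case: eqP => [->|].
rewrite big_ord_recr /= -IH /kernel.
rewrite -(scale1r (H (trunc T z))) -(scale1r (H (delta _ _))).
apply: H_lincomb => //.
apply/funext => s; rewrite !scale1r /trunc /restrict_seq /delta.
rewrite leq_eqVlt ltnS; case: eqP => [->|]; first by rewrite ltnn add0r.
by case: ifP; rewrite addr0.
Qed.

Lemma finite_memory_of_kernel :
  (forall t, continuous (kernel t)) -> minimal_FMP Zset H ->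
  (forall z : nat -> Z, (fun t => kernel t (z t)) @ \oo --> 0) ->
  finite_memory Zset H.
Proof.
move=> kernel_cont H_trunc_cvg kernel_cvg0.
exists kernel; split; last exact: eventually_zero_of_cvg0 kernelZ kernel_cvg0.
split=> [t | z Zz]; first exact: (conj (kernel_lincomb t) (kernel_cont t)).
by under eq_fun do rewrite -H_trunc; exact: H_trunc_cvg.
Qed.

Lemma conv_rep_kernel kappa : conv_rep Zset H kappa -> kappa = kernel.
Proof.
case=> kappa_lin kappa_conv; apply/funext => t; apply/funext => x.
have kappa0 s : kappa s 0 = 0.
  have [kappa_lincomb _] := kappa_lin s.
  by have := kappa_lincomb 0 0 0 0; rewrite !scale0r !addr0.
apply/esym/(norm_cvg_unique (kappa_conv _ (Zset_delta t x))).
apply: cvg_near_cst; exists t => // T /= tT.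
rewrite (eq_bigr (fun s : 'I_T.+1 => if s == t :> nat then kappa t x else 0)).
  by rewrite -big_mkcond (big_ord1_eq _ (fun=> kappa t x)) ltnS tT.
by move=> s _; rewrite /delta; case: eqP => [->|]; rewrite ?kappa0.
Qed.

Lemma finite_memory_sum kappa N : conv_rep Zset H kappa ->
  (forall t, (N <= t)%N -> kappa t = (fun=> 0)) ->
  forall z, Zset z -> H z = \sum_(t < N) kappa t (z t).
Proof.
move=> [_ kappa_conv] kappa_eq0 z Zz.
apply: (norm_cvg_unique (kappa_conv _ Zz)); apply: cvg_near_cst.
exists N => // T /= NT; rewrite -(subnKC (leqW NT)) big_split_ord /=.
by rewrite [X in _ + X]big1 ?addr0 // => t _; rewrite kappa_eq0 ?leq_addr.
Qed.

Section product_FMP.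
Hypothesis H_product_FMP : product_FMP Zset H.

Lemma product_FMP_cvg {T : Type} (F : set_system T) {FF : Filter F}
    (g : T -> nat -> Z) (z : nat -> Z) :
  Zset z -> (forall x, Zset (g x)) ->
  (g @ F --> (z : {ptws nat -> Z})) -> (fun x => H (g x)) @ F --> H z.
Proof.
move=> Zz Zg g_cvg.
have /subspace_continuousP /(_ z Zz) H_cont := H_product_FMP.
apply: (@cvg_comp _ _ _ g H _ (within Zset (nbhs (z : {ptws nat -> Z})))) => //.
move=> W /g_cvg; rewrite !nbhs_simpl /=.
by apply: filterS => x /(_ (Zg x)).
Qed.

Lemma minimal_FMP_of_product_FMP : minimal_FMP Zset H.
Proof.
by move=> z Zz; apply: product_FMP_cvg => //; exact: trunc_cvg.
Qed.

Lemma kernel_continuous_of_product_FMP t : continuous (kernel t).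
Proof.
by move=> x; apply: product_FMP_cvg => //; exact: delta_continuous.
Qed.

Lemma kernel_cvg0_of_product_FMP z : (fun t => kernel t (z t)) @ \oo --> 0.
Proof.
by rewrite -H_cst0; apply: product_FMP_cvg (delta_cvg0 z).
Qed.

End product_FMP.

Lemma finite_memory_of_product_FMP :
  product_FMP Zset H -> finite_memory Zset H.
Proof.
move=> H_FMP; apply: finite_memory_of_kernel.
- exact: kernel_continuous_of_product_FMP.
- exact: minimal_FMP_of_product_FMP.
- exact: kernel_cvg0_of_product_FMP.
Qed.

Lemma product_FMP_of_finite_memory :
  finite_memory Zset H -> product_FMP Zset H.
Proof.
move=> [kappa [kappa_rep [N kappa_eq0]]].
have kappa_cont t : continuous (kappa t) by case: kappa_rep => /(_ t) [].
pose G (z : {ptws nat -> Z}) := \sum_(t < N) kappa t (z t).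
apply: (@subspace_eq_continuous {ptws nat -> Z} Zset Y (from_subspace Zset G)).
  move=> z /set_mem Zz.
  by rewrite /from_subspace (finite_memory_sum _ _ kappa_rep kappa_eq0).
by apply: continuous_subspaceT; exact: finite_conv_continuous.
Qed.

Lemma minimal_FMP_of_finite_memory : finite_memory Zset H ->
  minimal_FMP Zset H /\ minimally_continuous H.
Proof.
move=> [kappa [kappa_rep _]]; have kappa_kernel := conv_rep_kernel _ kappa_rep.
subst kappa; case: kappa_rep => kernel_lin kernel_conv; split.
  by move=> z Zz; under eq_fun do rewrite H_trunc; exact: kernel_conv.
by move=> t; apply: continuous_subspaceT; case: (kernel_lin t).
Qed.

Lemma finite_memory_of_minimal_FMP : Zset = setT ->
  minimal_FMP Zset H -> minimally_continuous H -> finite_memory Zset H.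
Proof.
move=> Zset_full H_FMP H_cont; apply: finite_memory_of_kernel => // [t | z].
  exact/additive_continuous/unit_ball_continuous0/H_cont/kernelD.
apply: cvg_series_cvg_0; apply/cvg_ex; exists (H z).
rewrite -cvg_shiftS seriesEord /=.
under eq_fun do rewrite -H_trunc.
by apply: H_FMP; rewrite Zset_full.
Qed.

End linear_functional.

Theorem proposition3p13 (R : realType) (Z Y : normedModType R)
    (Zset : set (nat -> Z)) (H : (nat -> Z) -> Y) :
  standing_assumption Zset ->
  finite_dimensional Y ->
  c00 `<=` Zset ->
  linear_on Zset H ->
  (product_FMP Zset H <-> finite_memory Zset H) /\
  (Zset = setT ->
     (product_FMP Zset H <-> finite_memory Zset H) /\
     (finite_memory Zset H <-> minimal_FMP Zset H /\ minimally_continuous H)).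
Proof.
move=> _ _ c00_sub H_linear.
have product_FMP_finite_memory : product_FMP Zset H <-> finite_memory Zset H.
  split; [exact: finite_memory_of_product_FMP | exact: product_FMP_of_finite_memory].
split=> // Zset_full; split=> //; split; first exact: minimal_FMP_of_finite_memory.
by case; exact: finite_memory_of_minimal_FMP.
Qed.
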